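(* Let $X\in\mathbb{Z}^{d\times N}$ be a matrix of full rank $d$ representing an arithmetic matroid $\mathcal{A}$, and suppose $X$ is in $B$-basic form, $X=(B\,|\,A)$ with $B\in\mathbb{Z}^{d\times d}$ a diagonal matrix of full rank with non-negative entries and $A\in\mathbb{Z}^{d\times(N-d)}$. Suppose that $X'=(B\,|\,A')\in\mathbb{Z}^{d\times N}$ represents the same arithmetic matroid $\mathcal{A}$. Then $|a_{ij}|=|a'_{ij}|$ for all entries, i.e. the entries of $A$ and $A'$ are equal up to sign.
   Context: The arithmetic matroid represented by $X\in\mathbb{Z}^{d\times N}$ with columns $x_1,\dots,x_N$ is $([N],\operatorname{rk},m)$ where $\operatorname{rk}(S)$ is the dimension of the real span $\langle S\rangle_{\mathbb{R}}$ of $\{x_e:e\in S\}$ and $m(S)=|(\langle S\rangle_{\mathbb{R}}\cap\mathbb{Z}^d)/\langle S\rangle|$, with $\langle S\rangle$ the subgroup of $\mathbb{Z}^d$ generated by $\{x_e:e\in S\}$. Two matrices represent the same arithmetic matroid if these rank and multiplicity functions coincide. *)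

From HB Require Import structures.
From mathcomp Require Import all_boot all_order all_algebra.
From mathcomp Require Import Rstruct.
From Stdlib Require Import Reals.
Set Implicit Arguments. Unset Strict Implicit. Unset Printing Implicit Defensive.
Import Order.TTheory GRing.Theory Num.Theory.
Local Open Scope ring_scope.

Definition toR (d N : nat) (X : 'M[int]_(d, N)) : 'M[R]_(d, N) :=
  map_mx (fun z : int => (z%:~R : R)) X.

(* rk(S) = dim of the real span of {x_e : e in S}
   = rank of the real matrix whose columns outside S are zeroed *)
Definition rk (d N : nat) (X : 'M[int]_(d, N)) (S : {set 'I_N}) : nat :=
  \rank (\matrix_(i < d, j < N) (if j \in S then (X i j)%:~R else 0) : 'M[R]_(d, N)).

Definition in_lattice (d N : nat) (X : 'M[int]_(d, N)) (S : {set 'I_N})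
  (v : 'cV[int]_d) : Prop :=
  exists c : 'I_N -> int, v = \sum_(e in S) c e *: col e X.

Definition in_span (d N : nat) (X : 'M[int]_(d, N)) (S : {set 'I_N})
  (v : 'cV[int]_d) : Prop :=
  exists c : 'I_N -> R, toR v = \sum_(e in S) c e *: col e (toR X).

(* m(S) = k : the quotient group (<S>_R ∩ Z^d) / <S> has exactly k elements,
   i.e. there are k pairwise incongruent (mod <S>) representatives in
   <S>_R ∩ Z^d and every element of <S>_R ∩ Z^d is congruent to one of them. *)
Definition mult_is (d N : nat) (X : 'M[int]_(d, N)) (S : {set 'I_N}) (k : nat)
  : Prop :=
  exists r : 'I_k -> 'cV[int]_d,
    [/\ forall i, in_span X S (r i),
        forall i j, in_lattice X S (r i - r j) -> i = j
      & forall v, in_span X S v -> exists i, in_lattice X S (v - r i)].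

Definition same_arith_matroid (d N : nat) (X X' : 'M[int]_(d, N)) : Prop :=
  (forall S : {set 'I_N}, rk X S = rk X' S) /\
  (forall (S : {set 'I_N}) (k : nat), mult_is X S k <-> mult_is X' S k).

(* For an entry (i, j), let S consist of the columns of B other than the i-th together
   with the j-th column of A.  The i-th row of X vanishes on S when a_ij = 0, while for
   a_ij <> 0 the set S spans R^d, so rk S = d exactly when a_ij <> 0.  In the latter case
   v lies in <S> iff v_i = t a_ij and b_k | v_k - t a_kj (k <> i) for some integer t, so
   the integer vectors of the box 0 <= v_i < |a_ij|, 0 <= v_k < |b_k| represent the
   quotient (<S>_R ∩ Z^d) / <S> exactly once each: m(S) = |a_ij| prod_(k <> i) |b_k|.
   As X and X' share B, comparing rk and m on S yields |a_ij| = |a'_ij|. *)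

(* Imported before MathComp so that [%Z] denotes [int_scope] rather than [Z_scope]. *)
From Stdlib Require Import Reals.
From HB Require Import structures.
From mathcomp Require Import all_boot all_order all_algebra.
From mathcomp Require Import Rstruct.
Import Order.TTheory GRing.Theory Num.Theory.
Local Open Scope ring_scope.
Set Implicit Arguments. Unset Strict Implicit.

Lemma eq_of_dvdz_sub (b x y : int) :
  0 <= x < `|b| -> 0 <= y < `|b| -> (b %| x - y)%Z -> x = y.
Proof.
by move=> hx hy; rewrite -eqz_mod_dvd -!(modz_abs _ b) abszE !modz_small // => /eqP.
Qed.

Lemma in_latticeB d N (X : 'M[int]_(d, N)) (S : {set 'I_N}) v w :
  in_lattice X S v -> in_lattice X S w -> in_lattice X S (v - w).
Proof.
move=> [c ->] [c' ->]; exists (fun e => c e - c' e).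
by rewrite -sumrB; apply: eq_bigr => e _; rewrite scalerBl.
Qed.

Lemma mult_is_leq d N (X : 'M[int]_(d, N)) (S : {set 'I_N}) k k' :
  mult_is X S k -> mult_is X S k' -> (k <= k')%N.
Proof.
move=> [r [r_span r_inj _]] [r' [_ _ r'_cover]].
have /fin_all_exists [f rf] : forall x, exists y, in_lattice X S (r x - r' y).
  by move=> x; apply/r'_cover/r_span.
suff f_inj : injective f by have := leq_card _ f_inj; rewrite !card_ord.
move=> x y fxy; apply: r_inj.
by have := in_latticeB (rf x) (rf y); rewrite fxy opprB addrA subrK.
Qed.

Lemma mult_is_uniq d N (X : 'M[int]_(d, N)) (S : {set 'I_N}) k k' :
  mult_is X S k -> mult_is X S k' -> k = k'.
Proof.
by move=> hk hk'; apply/anti_leq; rewrite (mult_is_leq hk hk') (mult_is_leq hk' hk).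
Qed.

Definition masked_mx d N (X : 'M[int]_(d, N)) (S : {set 'I_N}) : 'M[R]_(d, N) :=
  \matrix_(i < d, j < N) (if j \in S then (X i j)%:~R else 0).

Lemma rkE d N (X : 'M[int]_(d, N)) (S : {set 'I_N}) :
  rk X S = \rank (masked_mx X S).
Proof. by []. Qed.

Lemma lincomb_colE (F : pzRingType) d N (X : 'M[F]_(d, N)) (S : {set 'I_N})
    (c : 'I_N -> F) p q :
  (\sum_(e in S) c e *: col e X) p q = \sum_(e in S) c e * X p e.
Proof. by rewrite summxE; apply: eq_bigr => e _; rewrite !mxE. Qed.

Lemma rk_lt_row0 d N (X : 'M[int]_(d, N)) (S : {set 'I_N}) k :
  (forall e, e \in S -> X k e = 0) -> (rk X S < d)%N.
Proof.
move=> Xk0; rewrite rkE ltn_neqAle rank_leq_row andbT -/(row_free _).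
apply/row_freePn; exists k.
suff -> : row k (masked_mx X S) = 0 by rewrite sub0mx.
by apply/rowP => e; rewrite !mxE; case: ifP => // /Xk0 ->.
Qed.

Lemma rk_spanning d N (X : 'M[int]_(d, N)) (S : {set 'I_N}) :
  (forall v, in_span X S v) -> rk X S = d.
Proof.
move=> span; apply/eqP; rewrite rkE eqn_leq rank_leq_row /= -mxrank_tr.
rewrite -[X in (X <= _)%N](mxrank1 R d) mxrankS //; apply/row_subP => k.
have [c vE] := span (delta_mx k 0).
pose w : 'cV[R]_N := \col_e (if e \in S then c e else 0).
suff -> : row k 1%:M = w^T *m (masked_mx X S)^T by apply: submxMl.
have deltaE : toR (delta_mx k 0 : 'cV[int]_d) = delta_mx k 0.
  by apply/matrixP => p q; rewrite !mxE rmorph_nat.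
rewrite -trmx_mul rowE mulmx1 -trmx_delta -deltaE vE; congr (_^T).
apply/matrixP => p q; rewrite (ord1 q) lincomb_colE.
rewrite !mxE big_mkcond /=; apply: eq_bigr => e _.
by rewrite !mxE; case: ifP; rewrite ?mulr0 // mulrC.
Qed.

Lemma is_diag_toR d N (X : 'M[int]_(d, N)) : is_diag_mx X -> is_diag_mx (toR X).
Proof.
by move=> /is_diag_mxP diagX; apply/is_diag_mxP => p q pq; rewrite mxE diagX.
Qed.

Lemma row_free_diag_neq0 (F : fieldType) n (M : 'M[F]_n) k :
  is_diag_mx M -> row_free M -> M k k != 0.
Proof.
move=> /is_diag_mxP diagM; apply: contraTN => /eqP Mkk0; apply/row_freePn.
exists k; suff -> : row k M = 0 by rewrite sub0mx.
by apply/rowP => l; rewrite !mxE; have [<-|/diagM] := eqVneq k l.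
Qed.

Lemma split_lshift m n (k : 'I_m) : split (lshift n k) = inl k.
Proof. exact: (unsplitK (inl _ k)). Qed.

Lemma split_rshift m n (k : 'I_n) : split (rshift m k) = inr k.
Proof. exact: (unsplitK (inr _ k)). Qed.

Definition basis_exchange d n (i : 'I_d) (j : 'I_n) : {set 'I_(d + n)} :=
  [set e | match split e with inl k => k != i | inr l => l == j end].

Section BasisExchange.

Variables (d n : nat) (i : 'I_d) (j : 'I_n).

Lemma lshift_basis_exchange k : (lshift n k \in basis_exchange i j) = (k != i).
Proof. by rewrite inE split_lshift. Qed.

Lemma rshift_basis_exchange l : (rshift d l \in basis_exchange i j) = (l == j).
Proof. by rewrite inE split_rshift. Qed.

Lemma big_basis_exchange (V : nmodType) (F : 'I_(d + n) -> V) :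
  \sum_(e in basis_exchange i j) F e =
  \sum_(k | k != i) F (lshift n k) + F (rshift d j).
Proof.
rewrite big_split_ord; congr (_ + _).
  by apply: eq_bigl => k; rewrite lshift_basis_exchange.
by rewrite (big_pred1 j) // => l; rewrite rshift_basis_exchange.
Qed.

Lemma lincomb_basis_exchangeE (F : pzRingType) (B : 'M[F]_d) (A : 'M[F]_(d, n))
    (c : 'I_(d + n) -> F) p :
  is_diag_mx B ->
  (\sum_(e in basis_exchange i j) c e *: col e (row_mx B A)) p 0 =
  (if p == i then 0 else c (lshift n p) * B p p) + c (rshift d j) * A p j.
Proof.
move=> /is_diag_mxP diagB; rewrite lincomb_colE big_basis_exchange row_mxEr.
congr (_ + _); have [->|pi] := eqVneq p i.
  by rewrite big1 // => k ki; rewrite row_mxEl diagB ?mulr0 // eq_sym.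
rewrite (bigD1 p) //= row_mxEl big1 ?addr0 // => k /andP [_ kp].
by rewrite row_mxEl diagB ?mulr0 // eq_sym.
Qed.

Variables (B : 'M[int]_d) (A : 'M[int]_(d, n)).
Hypothesis diagB : is_diag_mx B.

Lemma in_lattice_basis_exchange v :
  in_lattice (row_mx B A) (basis_exchange i j) v <->
  exists t, v i 0 = t * A i j /\ forall k, k != i -> (B k k %| (v k 0 - t * A k j)%R)%Z.
Proof.
split=> [[c ->]|[t [vi vk]]].
  exists (c (rshift d j)); split=> [|k ki]; rewrite lincomb_basis_exchangeE //.
    by rewrite eqxx add0r.
  by rewrite (negbTE ki) addrK dvdz_mull.
exists (fun e => if split e is inl k then ((v k 0 - t * A k j)%R %/ B k k)%Z else t).
apply/matrixP => p q; rewrite (ord1 q) lincomb_basis_exchangeE //.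
rewrite split_lshift split_rshift; have [->|pi] := eqVneq p i; first by rewrite add0r.
by rewrite divzK ?vk // subrK.
Qed.

Lemma in_span_basis_exchange v :
  (forall k, B k k != 0) -> A i j != 0 ->
  in_span (row_mx B A) (basis_exchange i j) v.
Proof.
move=> nzB nzA; pose s : R := (v i 0)%:~R / (A i j)%:~R.
exists (fun e => if split e is inl k then ((v k 0)%:~R - s * (A k j)%:~R) / (B k k)%:~R
                 else s).
apply/matrixP => p q; rewrite (ord1 q) /toR map_row_mx.
rewrite lincomb_basis_exchangeE ?is_diag_toR //.
rewrite !mxE split_lshift split_rshift.
have [->|pi] := eqVneq p i; first by rewrite add0r divfK ?intr_eq0.
by rewrite divfK ?intr_eq0 // subrK.
Qed.

Lemma rk_basis_exchange :
  (forall k, B k k != 0) ->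
  (rk (row_mx B A) (basis_exchange i j) == d) = (A i j != 0).
Proof.
move=> nzB; have [Aij0|nzA] := eqVneq (A i j) 0; last first.
  by rewrite rk_spanning ?eqxx // => v; apply: in_span_basis_exchange.
rewrite ltn_eqF //; apply: (@rk_lt_row0 _ _ _ _ i) => e.
rewrite -(splitK e); case: (split e) => k.
  rewrite -[unsplit _]/(lshift n k) lshift_basis_exchange row_mxEl => ki.
  by rewrite (is_diag_mxP diagB) // eq_sym.
by rewrite -[unsplit _]/(rshift d k) rshift_basis_exchange row_mxEr => /eqP ->.
Qed.

Section Box.

Hypotheses (nzB : forall k, B k k != 0) (nzA : A i j != 0).

Definition box_side k : int := if k == i then A i j else B k k.

Local Notation box := {dffun forall k, 'I_`|box_side k|}.

Definition box_entry (f : box) k : int := (f k : nat)%:Z.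

Definition box_vec (f : box) : 'cV[int]_d := \col_k box_entry f k.

Lemma box_side_neq0 k : box_side k != 0.
Proof. by rewrite /box_side; case: ifP. Qed.

Lemma card_box : #|box| = (`|A i j| * \prod_(k | k != i) `|B k k|)%N.
Proof.
rewrite card_dep_ffun foldrE big_image /= (bigD1 i) //= card_ord /box_side eqxx.
by congr (_ * _)%N; apply: eq_bigr => k /negbTE ki; rewrite card_ord ki.
Qed.

Lemma box_entry_range f k : 0 <= box_entry f k < `|box_side k|.
Proof. by rewrite -abszE ltz_nat ltn_ord. Qed.

Lemma box_entry_inj f g :
  (forall k, (box_side k %| box_entry f k - box_entry g k)%Z) -> f = g.
Proof.
move=> dvd_fg; apply/ffunP => k; apply/val_inj/eqP; rewrite -eqz_nat.
exact/eqP/(eq_of_dvdz_sub (box_entry_range f k) (box_entry_range g k)).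
Qed.

Lemma box_vec_lattice_inj f g :
  in_lattice (row_mx B A) (basis_exchange i j) (box_vec f - box_vec g) -> f = g.
Proof.
move=> /in_lattice_basis_exchange [t []]; rewrite !mxE => fg_i fg_k.
have dvd_i : (box_side i %| box_entry f i - box_entry g i)%Z.
  by rewrite /box_side eqxx fg_i dvdz_mull.
have t0 : t = 0.
  move: fg_i; rewrite (eq_of_dvdz_sub (box_entry_range _ _) (box_entry_range _ _) dvd_i).
  by rewrite subrr => /esym/eqP; rewrite mulf_eq0 (negbTE nzA) orbF => /eqP.
apply: box_entry_inj => k; have [->|ki] := eqVneq k i; first exact: dvd_i.
by rewrite /box_side (negbTE ki); have := fg_k k ki; rewrite !mxE t0 mul0r subr0.
Qed.

Lemma box_vec_cover v :
  exists f, in_lattice (row_mx B A) (basis_exchange i j) (v - box_vec f).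
Proof.
pose t := divz (v i 0) (A i j).
pose u k := if k == i then v i 0 else v k 0 - t * A k j.
pose res k := modz (u k) (box_side k).
have res_ge0 k : 0 <= res k by apply/modz_ge0/box_side_neq0.
have res_lt k : (`|res k| < `|box_side k|)%N.
  by rewrite -ltz_nat gez0_abs // ltz_mod ?box_side_neq0.
pose f : box := [ffun k => Ordinal (res_lt k)].
have entry_f k : box_entry f k = res k by rewrite /box_entry ffunE gez0_abs.
exists f; apply/in_lattice_basis_exchange; exists t; rewrite !mxE; split=> [|k ki].
  by rewrite entry_f /res /u /box_side eqxx {1}(divz_eq (v i 0) (A i j)) addrK.
have uk : u k = v k 0 - t * A k j by rewrite /u (negbTE ki).
have bk : box_side k = B k k by rewrite /box_side (negbTE ki).
rewrite !mxE addrAC -uk entry_f /res {1}(divz_eq (u k) (box_side k)) addrK bk.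
exact: dvdz_mull.
Qed.

Lemma mult_basis_exchange :
  mult_is (row_mx B A) (basis_exchange i j)
    (`|A i j| * \prod_(k | k != i) `|B k k|)%N.
Proof.
rewrite -card_box; exists (box_vec \o enum_val); split=> [x|x y|v _].
- exact: in_span_basis_exchange.
- by move/box_vec_lattice_inj/enum_val_inj.
- by have [f fv] := box_vec_cover v; exists (enum_rank f); rewrite /= enum_rankK.
Qed.

End Box.

End BasisExchange.

Unset Implicit Arguments.

Theorem lemma3p3 (d n : nat) (B : 'M[int]_d) (A A' : 'M[int]_(d, n)) :
  rk (row_mx B A) setT = d ->
  is_diag_mx B ->
  (forall i : 'I_d, 0 <= B i i) ->
  \rank (toR B) = d ->
  same_arith_matroid (row_mx B A) (row_mx B A') ->
  forall (i : 'I_d) (j : 'I_n), `|A i j| = `|A' i j|.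
Proof.
move=> _ diagB _ /eqP rankB [same_rk same_mult] i j.
have nzB k : B k k != 0.
  have := row_free_diag_neq0 k (is_diag_toR diagB) rankB.
  by rewrite mxE intr_eq0; apply.
have rk_full A0 := rk_basis_exchange i j A0 diagB nzB.
have nzA_iff : (A i j != 0) = (A' i j != 0) by rewrite -rk_full -rk_full same_rk.
have [Aij0|nzA] := eqVneq (A i j) 0.
  by move: nzA_iff; rewrite Aij0 eqxx => /esym/negbFE/eqP ->.
have nzA' : A' i j != 0 by rewrite -nzA_iff.
have := mult_is_uniq (mult_basis_exchange diagB nzB nzA)
  ((same_mult _ _).2 (mult_basis_exchange diagB nzB nzA')).
have prodB_gt0 : (0 < \prod_(k | k != i) `|B k k|)%N.
  by rewrite prodn_cond_gt0 // => k _; rewrite absz_gt0.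
by move/eqP; rewrite eqn_pmul2r // -!abszE => /eqP ->.
Qed.
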